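(* Let $A,B,C\in\mathcal K[\partial]$ be differential operators such that $A=BC$ and $A$ is integrable. Then $B$ is integrable.
   Context: $\mathcal V$ is an algebra of differential functions in one variable $u$ (commutative $\mathbb C$-algebra containing $R=\mathbb C[u,u',\dots]$ with commuting derivations $\partial/\partial u^{(n)}$ extending those of $R$ and $\partial/\partial x$ commuting with them and vanishing on $R$, each element having finitely many nonzero partial derivatives); total derivative $\partial=\sum_nu^{(n+1)}\frac{\partial}{\partial u^{(n)}}+\frac{\partial}{\partial x}$. Standing assumptions: $\mathcal V$ is a normal domain with fraction field $\mathcal K$; $\mathcal C=\ker\partial$ is algebraically closed. $X_F=\sum_nF^{(n)}\frac{\partial}{\partial u^{(n)}}$; $D_F=\sum_n\frac{\partial F}{\partial u^{(n)}}\partial^n$. Differential operators with $\partial a=a\partial+a'$; $X_F$ acts on them coefficientwise. For $P=\sum p_k\partial^k$, $(D_P)_F=\sum_kF^{(k)}D_{p_k}$; bidifferential $M=\sum M_{kl}\partial_1^k\partial_2^l$ ($M_{kl}\in\mathcal K$), $M_F=\sum M_{kl}F^{(k)}\partial^l$. A differential operator $A$ is integrable if there is a bidifferential operator $M$ over $\mathcal K$ such that $X_{A(F)}(A)-(D_A)_FA=AM_F$ for all $F\in\mathcal V$. *)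

From HB Require Import structures.
From mathcomp Require Import all_boot all_algebra.
From mathcomp Require Import complex reals.
Set Implicit Arguments. Unset Strict Implicit. Unset Printing Implicit Defensive.
Import GRing.Theory.
Local Open Scope ring_scope.

(* An algebra of differential functions V in one variable u, presented inside
   its fraction field K.  The complex numbers are R[i] for a realType R
   (any realType is the field of real numbers), embedded in K by [iota].
   The derivations d n = d/du^(n) and dx = d/dx are given on K (they extend
   uniquely from V to its fraction field), and V is required to be stable
   under them. *)
Record DiffAlg (R : realType) (K : fieldType) := {
  iota : {rmorphism R[i] -> K};
  V : pred K;
  u : nat -> K;
  d : nat -> K -> K;
  dx : K -> K;
  ord : K -> nat;
  V0 : 0 \in V; V1 : 1 \in V;
  VB : forall a b, a \in V -> b \in V -> a - b \in V;
  VM : forall a b, a \in V -> b \in V -> a * b \in V;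
  Viota : forall c, iota c \in V;
  Vu : forall n, u n \in V;
  Kfrac : forall k, exists a b, [/\ a \in V, b \in V, b != 0 & k = a / b];
  Vnormal : forall (p : {poly K}) (x : K),
      p \is monic -> (forall i, p`_i \in V) -> root p x -> x \in V;
  dD : forall n a b, d n (a + b) = d n a + d n b;
  dM : forall n a b, d n (a * b) = a * d n b + b * d n a;
  diota : forall n c, d n (iota c) = 0;
  dxD : forall a b, dx (a + b) = dx a + dx b;
  dxM : forall a b, dx (a * b) = a * dx b + b * dx a;
  dxiota : forall c, dx (iota c) = 0;
  du : forall n m, d n (u m) = (n == m)%:R;
  dxu : forall m, dx (u m) = 0;
  dC : forall n m a, d n (d m a) = d m (d n a);
  dxC : forall n a, d n (dx a) = dx (d n a);
  dV : forall n a, a \in V -> d n a \in V;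
  dxV : forall a, a \in V -> dx a \in V;
  ordP : forall a n, (ord a <= n)%N -> d n a = 0;
}.

Section Ops.
Variables (R : realType) (K : fieldType) (S : DiffAlg R K).

Definition der (a : K) : K :=
  \sum_(n < ord S a) u S n.+1 * d S n a + dx S a.

Definition dern (n : nat) (F : K) : K := iter n der F.

Definition constants : pred K := [pred a | (a \in V S) && (der a == 0)].

Definition constants_alg_closed : Prop :=
  forall p : {poly K}, (forall i, p`_i \in constants) -> (1 < size p)%N ->
    exists2 x, x \in constants & root p x.

(* Differential operators sum_k p_k \partial^k over K are represented by
   their coefficient polynomials {poly K} ('X^k stands for \partial^k);
   addition and left multiplication by elements of K are the polynomial
   ones, composition is given by the Leibniz rule
   \partial^i b = sum_l binom(i,l) b^(l) \partial^(i-l). *)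
Definition dmul (P Q : {poly K}) : {poly K} :=
  \sum_(i < size P) \sum_(j < size Q) \sum_(l < i.+1)
     (P`_i * 'C(i, l)%:R * dern l Q`_j) *: 'X^(i - l + j).

Definition dapply (P : {poly K}) (F : K) : K :=
  \sum_(k < size P) P`_k * dern k F.

Definition XF (F a : K) : K := \sum_(n < ord S a) dern n F * d S n a.

Definition XFop (F : K) (P : {poly K}) : {poly K} := map_poly (XF F) P.

Definition Dfun (a : K) : {poly K} := \sum_(n < ord S a) d S n a *: 'X^n.

Definition DopF (P : {poly K}) (F : K) : {poly K} :=
  \sum_(k < size P) dern k F *: Dfun P`_k.

(* Bidifferential operators M = sum M_kl \partial_1^k \partial_2^l over K are
   represented as {poly {poly K}} (outer index k, inner index l);
   M_F = sum_kl M_kl F^(k) \partial^l. *)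
Definition bidF (M : {poly {poly K}}) (F : K) : {poly K} :=
  \sum_(k < size M) dern k F *: M`_k.

Definition integrable (A : {poly K}) : Prop :=
  exists M : {poly {poly K}}, forall F, F \in V S ->
    XFop (dapply A F) A - dmul (DopF A F) A = dmul A (bidF M F).

End Ops.

(* Put L_B(F) := X_{B(F)}(B) - (D_B)_F B; B is integrable iff L_B(F) is a
   left multiple B M_F. Since L_B is bidifferential in F, it can be divided on
   the left by B: L_B(F) = B N_F + R_F with R of order < ord B in \partial, and
   it remains to show R = 0. The product rule
   L_{BC}(F) = L_B(C(F)) C + B (X_{A(F)}(C) - (D_C)_F A)
   shows that integrability of A = BC makes R_{C(F)} C left divisible by B for
   every F. Testing at F = u^(N) with N large and comparing the highest
   variable u^(t) on which both sides depend forces R_{C(F)} = 0, whence R = 0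
   as C != 0. *)

From mathcomp Require Import all_boot all_algebra.
From mathcomp Require Import complex reals.
From mathcomp Require Import ring zify.
Unset Printing Implicit Defensive.
Import GRing.Theory.
Local Open Scope ring_scope.

Lemma sum_ord_truncate {V : nmodType} (f : nat -> V) m n :
  (forall i, (m <= i)%N -> f i = 0) -> (forall i, (n <= i)%N -> f i = 0) ->
  \sum_(i < n) f i = \sum_(i < m) f i.
Proof.
have widen p q : (forall i, (p <= i)%N -> f i = 0) -> (p <= q)%N ->
    \sum_(i < q) f i = \sum_(i < p) f i.
  move=> fp pq; rewrite -!(big_mkord xpredT) (big_cat_nat (leq0n p) pq) /=.
  rewrite [X in _ + X = _]big_nat_cond [X in _ + X = _]big1 ?addr0 //.
  by move=> i /andP [/andP [/fp]].
move=> fm fn; case: (leqP m n) => [/(widen _ _ fm) // | /ltnW/(widen _ _ fn) -> //].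
Qed.

Lemma sum_ord_delta {V : nmodType} (f : nat -> V) m e :
  \sum_(j < m) f j *+ (e == j :> nat) = if (e < m)%N then f e else 0.
Proof.
rewrite (eq_bigr (fun j : 'I_m => if (j : nat) == e then f j else 0)); last first.
  by move=> j _; rewrite eq_sym; case: eqP.
by rewrite -big_mkcond /= (big_ord1_eq (+%R : Monoid.law 0) f e m).
Qed.

Lemma size_sum_leq {L : nzSemiRingType} I (r : seq I) (Pr : pred I)
    (g : I -> {poly L}) D :
  (forall i, Pr i -> (size (g i) <= D)%N) -> (size (\sum_(i <- r | Pr i) g i)%R <= D)%N.
Proof.
move=> gD; elim/big_ind: _ => // [|p q pD qD]; first by rewrite size_poly0.
by rewrite (leq_trans (size_polyD _ _)) // geq_max pD qD.
Qed.

Section AdditiveFun.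
Context {U V : zmodType} {f : U -> V} (fD : {morph f : a b / a + b}).

Lemma additive0 : f 0 = 0.
Proof. by apply: (addrI (f 0)); rewrite -fD !addr0. Qed.

Lemma additiveB : {morph f : a b / a - b}.
Proof.
have fN a : f (- a) = - f a by apply: (addrI (f a)); rewrite -fD !subrr additive0.
by move=> a b; rewrite fD fN.
Qed.

Lemma additive_sum I (r : seq I) (P : pred I) (g : I -> U) :
  f (\sum_(i <- r | P i) g i) = \sum_(i <- r | P i) f (g i).
Proof. by elim/big_rec2: _ => [|i y1 y2 _ <-]; rewrite ?additive0 ?fD. Qed.

Lemma additiveMn a n : f (a *+ n) = f a *+ n.
Proof. by elim: n => [|n IH]; rewrite ?mulr0n ?additive0 // !mulrS fD IH. Qed.

End AdditiveFun.

Lemma derivation_nat {L : comNzRingType} {f : L -> L} :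
  {morph f : a b / a + b} -> (forall a b, f (a * b) = a * f b + b * f a) ->
  forall k, f k%:R = 0.
Proof.
move=> fD fM k; have f1 : f 1 = 0.
  by apply: (addrI (f 1)); rewrite addr0 -{3}(mulr1 1) fM mul1r.
by rewrite (additiveMn fD) f1 mul0rn.
Qed.

Lemma nderivnE (K : comNzRingType) (P : {poly K}) l :
  P^`N(l) = \sum_(i < size P) (P`_i * 'C(i, l)%:R) *: 'X^(i - l).
Proof.
rewrite -[P in nderivn _ P]coefK poly_def linear_sum; apply: eq_bigr => i _.
by rewrite linearZ /= nderivnXn -scalerMnr scalerMnl mulr_natr.
Qed.

Arguments dern : simpl never.

Section DiffAlgebra.
Variables (R : realType) (K : fieldType) (S : DiffAlg R K).
Implicit Types (a b c : K) (B C P Q T Z : {poly K}) (F G : K).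

Definition depends_below a N := forall n, (N <= n)%N -> d S n a = 0.

Lemma depends_below_le {a N} M : depends_below a N -> (N <= M)%N -> depends_below a M.
Proof. by move=> aN NM n Mn; apply: aN; apply: leq_trans Mn. Qed.

Lemma depends_below_ord {a N} : (ord S a <= N)%N -> depends_below a N.
Proof. by move=> aN n Nn; apply: ordP; apply: leq_trans Nn. Qed.

Lemma common_depends_below a b c :
  exists N, [/\ depends_below a N, depends_below b N & depends_below c N].
Proof. by exists (ord S a + ord S b + ord S c)%N; split; apply: depends_below_ord; lia. Qed.

Lemma d0 n : d S n 0 = 0. Proof. exact: additive0 (dD S n). Qed.

Lemma d_sum n I (r : seq I) (P : pred I) (g : I -> K) :
  d S n (\sum_(i <- r | P i) g i) = \sum_(i <- r | P i) d S n (g i).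
Proof. by rewrite (additive_sum (dD S n)). Qed.

Lemma d_nat n k : d S n k%:R = 0. Proof. exact: (derivation_nat (dD S n) (dM S n) k). Qed.

Lemma dx_nat k : dx S k%:R = 0. Proof. exact: (derivation_nat (dxD S) (dxM S) k). Qed.

Lemma dMl n a b : d S n a = 0 -> d S n (a * b) = a * d S n b.
Proof. by move=> da; rewrite dM da mulr0 addr0. Qed.

Lemma depends_below0 N : depends_below 0 N.
Proof. by move=> n _; apply: d0. Qed.

Definition poly_ord P := (\max_(e < size P) ord S P`_e)%N.

Lemma poly_ordP P e : depends_below P`_e (poly_ord P).
Proof.
have [eP|/leq_sizeP-> //] := ltnP e (size P); last exact: depends_below0.
apply: depends_below_ord.
exact: (@leq_bigmax _ (fun e : 'I_(size P) => ord S P`_e) (Ordinal eP)).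
Qed.

(** * The total derivative *)

Lemma der_wide {a N} : depends_below a N ->
  der S a = \sum_(n < N) u S n.+1 * d S n a + dx S a.
Proof.
move=> aN; rewrite /der; congr (_ + _).
by apply: (sum_ord_truncate (fun n => u S n.+1 * d S n a)) => n;
  [move/aN | move/ordP] => ->; rewrite mulr0.
Qed.

Lemma derD : {morph der S : a b / a + b}.
Proof.
move=> a b; have [N [aN bN abN]] := common_depends_below a b (a + b).
rewrite (der_wide abN) (der_wide aN) (der_wide bN) dxD addrACA -big_split /=.
by congr (_ + _); apply: eq_bigr => n _; rewrite dD mulrDr.
Qed.

Lemma derM a b : der S (a * b) = der S a * b + a * der S b.
Proof.
have [N [aN bN abN]] := common_depends_below a b (a * b).
rewrite (der_wide abN) (der_wide aN) (der_wide bN) dxM.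
rewrite mulrDl mulrDr addrACA mulr_suml mulr_sumr -big_split /=.
by congr (_ + _); [apply: eq_bigr => n _; rewrite dM | ]; ring.
Qed.

Lemma der0 : der S 0 = 0. Proof. exact: additive0 derD. Qed.

Lemma der_sum I (r : seq I) (P : pred I) (g : I -> K) :
  der S (\sum_(i <- r | P i) g i) = \sum_(i <- r | P i) der S (g i).
Proof. by rewrite (additive_sum derD). Qed.

Lemma der_nat k : der S k%:R = 0.
Proof.
have k0 : depends_below k%:R 0 by move=> n _; apply: d_nat.
by rewrite (der_wide k0) big_ord0 add0r dx_nat.
Qed.

Lemma d_der m a :
  d S m (der S a) = der S (d S m a) + (if m is m'.+1 then d S m' a else 0).
Proof.
set N := (ord S a).+1.
have aN : depends_below a N by apply: depends_below_ord.
have daN : depends_below (d S m a) N by move=> n Nn; rewrite dC aN ?d0.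
rewrite (der_wide aN) (der_wide daN) dD d_sum dxC.
under eq_bigr => n _ do rewrite dM du dC.
rewrite big_split /= addrAC; congr (_ + _).
case: m {daN} => [|m]; first by rewrite big1 // => n _; rewrite mulr0.
under eq_bigr => n _ do rewrite eqSS mulr_natr.
by rewrite (sum_ord_delta (fun n => d S n a)); case: ltnP => // /aN ->.
Qed.

Lemma der_u m : der S (u S m) = u S m.+1.
Proof.
have um : depends_below (u S m) m.+1 by move=> n; rewrite du => /gtn_eqF ->.
rewrite (der_wide um) dxu addr0 big_ord_recr /= du eqxx mulr1 big1 ?add0r // => n _.
by rewrite du (ltn_eqF (ltn_ord n)) mulr0.
Qed.

Lemma dernS n F : dern S n.+1 F = der S (dern S n F).
Proof. by rewrite /dern iterS. Qed.

Lemma dern_addn k l F : dern S (k + l) F = dern S k (dern S l F).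
Proof. by rewrite /dern iterD. Qed.

Lemma dernD n : {morph dern S n : a b / a + b}.
Proof. by elim: n => // n IH a b; rewrite !dernS IH derD. Qed.

Lemma dern0 n : dern S n 0 = 0. Proof. exact: additive0 (dernD n). Qed.

Lemma dern_sum n I (r : seq I) (P : pred I) (g : I -> K) :
  dern S n (\sum_(i <- r | P i) g i) = \sum_(i <- r | P i) dern S n (g i).
Proof. by rewrite (additive_sum (dernD n)). Qed.

Lemma dern_u k m : dern S k (u S m) = u S (m + k).
Proof. by elim: k => [|k IH]; rewrite ?addn0 // dernS IH der_u addnS. Qed.

Lemma dern_mul i a b :
  dern S i (a * b) = \sum_(l < i.+1) 'C(i, l)%:R * (dern S l a * dern S (i - l) b).
Proof.
elim: i => [|i IH]; first by rewrite big_ord1 /= mul1r.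
rewrite dernS IH der_sum.
under eq_bigr => l _ do rewrite derM der_nat mul0r add0r derM -!dernS mulrDr.
rewrite big_split /= [RHS]big_ord_recl bin0 subn0 mul1r.
have shift : \sum_(l < i.+1) 'C(i, l)%:R * (dern S l a * dern S (i - l).+1 b) =
    a * dern S i.+1 b + \sum_(l < i.+1) 'C(i, l.+1)%:R * (dern S l.+1 a * dern S (i - l) b).
  rewrite big_ord_recl [in RHS]big_ord_recr /= bin0 subn0 mul1r bin_small // mul0r addr0.
  congr (_ + _); apply: eq_bigr => l _.
  by rewrite /bump /= add1n -subSn ?ltn_ord // subSS.
rewrite shift addrCA; congr (_ + _); rewrite -big_split; apply: eq_bigr => l _ /=.
rewrite binS natrD; ring.
Qed.

Lemma depends_below_dern {z N} l :
  depends_below z N -> depends_below (dern S l z) (N + l).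
Proof.
move=> zN; elim: l => [|l IH] n; first by rewrite addn0; apply: zN.
rewrite addnS dernS d_der => ln; rewrite IH ?der0 ?add0r; last exact: ltnW.
by case: n ln => // n; rewrite ltnS; apply: IH.
Qed.

Lemma d_dern_top {z H} l :
  depends_below z H.+1 -> d S (H + l) (dern S l z) = d S H z.
Proof.
move=> zH; elim: l => [|l IH]; first by rewrite addn0.
by rewrite addnS dernS d_der (depends_below_dern l zH) ?der0 ?add0r ?IH ?addSn.
Qed.

(** * Differential operators *)

Lemma dapply_wide {P} F {N} : (size P <= N)%N ->
  dapply S P F = \sum_(k < N) P`_k * dern S k F.
Proof.
move=> PN; rewrite /dapply; apply: (sum_ord_truncate (fun k => P`_k * dern S k F)) => k.
  by move=> Nk; rewrite nth_default ?mul0r // (leq_trans PN).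
by move=> Pk; rewrite nth_default ?mul0r.
Qed.

Lemma dapplyDl F : {morph dapply S ^~ F : P Q / P + Q}.
Proof.
move=> P Q; set N := (size P + size Q)%N.
rewrite !(@dapply_wide _ _ N) ?leq_addr ?leq_addl //; last first.
  by rewrite (leq_trans (size_polyD _ _)) // geq_max leq_addr leq_addl.
by rewrite -big_split; apply: eq_bigr => k _; rewrite coefD mulrDl.
Qed.

Lemma dapply0l F : dapply S 0 F = 0. Proof. exact: additive0 (dapplyDl F). Qed.

Lemma dapplyBl F : {morph dapply S ^~ F : P Q / P - Q}.
Proof. exact: additiveB (dapplyDl F). Qed.

Lemma dapply_suml I (r : seq I) (Pr : pred I) (g : I -> {poly K}) F :
  dapply S (\sum_(i <- r | Pr i) g i) F = \sum_(i <- r | Pr i) dapply S (g i) F.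
Proof. by rewrite (additive_sum (dapplyDl F)). Qed.

Lemma dapplyZl c P F : dapply S (c *: P) F = c * dapply S P F.
Proof.
rewrite (@dapply_wide _ _ (size P)) ?size_scale_leq // /dapply mulr_sumr.
by apply: eq_bigr => k _; rewrite coefZ mulrA.
Qed.

Lemma dapplyXn k F : dapply S 'X^k F = dern S k F.
Proof.
rewrite (@dapply_wide _ _ k.+1) ?size_polyXn // big_ord_recr /= coefXn eqxx mul1r.
by rewrite big1 ?add0r // => i _; rewrite coefXn (ltn_eqF (ltn_ord i)) mul0r.
Qed.

Lemma dapplyDr P : {morph dapply S P : F G / F + G}.
Proof.
by move=> F G; rewrite /dapply -big_split; apply: eq_bigr => i _; rewrite dernD mulrDr.
Qed.

Lemma dapplyBr P : {morph dapply S P : F G / F - G}.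
Proof. exact: additiveB (dapplyDr P). Qed.

Lemma dapply_dmul P Q G : dapply S (dmul S P Q) G = dapply S P (dapply S Q G).
Proof.
rewrite /dmul dapply_suml [RHS]/dapply; apply: eq_bigr => i _.
rewrite dapply_suml dern_sum mulr_sumr; apply: eq_bigr => j _.
rewrite dapply_suml dern_mul mulr_sumr; apply: eq_bigr => l _.
by rewrite dapplyZl dapplyXn -dern_addn !mulrA.
Qed.

(* Test P on u^(N) with N beyond the variables of its coefficients: the
   derivative in u^(N + j) then isolates P_j. *)
Lemma dapply_eq0 P : (forall G, G \in V S -> dapply S P G = 0) -> P = 0.
Proof.
move=> P0; set N := poly_ord P; apply/polyP => j; rewrite coef0.
have [jP|] := ltnP j (size P); last by move/leq_sizeP; apply.
have := congr1 (d S (N + j)) (P0 _ (Vu S N)).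
rewrite d0 /dapply d_sum (bigD1 (Ordinal jP)) //= dern_u dMl ?poly_ordP ?leq_addr //.
rewrite du eqxx mulr1 big1 ?addr0 // => k /eqP jk.
rewrite dern_u dMl ?poly_ordP ?leq_addr // du eqn_add2l eq_sym.
by case: eqP => [e|]; [case: jk; apply: val_inj; rewrite /= e | rewrite mulr0].
Qed.

Lemma dapply_inj P Q :
  (forall G, G \in V S -> dapply S P G = dapply S Q G) -> P = Q.
Proof.
move=> PQ; apply/eqP; rewrite -subr_eq0; apply/eqP/dapply_eq0 => G VG.
by rewrite dapplyBl PQ ?subrr.
Qed.

Lemma XF_wide F {a N} : depends_below a N ->
  XF S F a = \sum_(n < N) dern S n F * d S n a.
Proof.
move=> aN; rewrite /XF.
by apply: (sum_ord_truncate (fun n => dern S n F * d S n a)) => n;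
  [move/aN | move/ordP] => ->; rewrite mulr0.
Qed.

Lemma XFD F : {morph XF S F : a b / a + b}.
Proof.
move=> a b; have [N [aN bN abN]] := common_depends_below a b (a + b).
rewrite (XF_wide _ abN) (XF_wide _ aN) (XF_wide _ bN) -big_split.
by apply: eq_bigr => n _; rewrite dD mulrDr.
Qed.

Lemma XF0 F : XF S F 0 = 0. Proof. exact: additive0 (XFD F). Qed.

Lemma XF_sum F I (r : seq I) (Pr : pred I) (g : I -> K) :
  XF S F (\sum_(i <- r | Pr i) g i) = \sum_(i <- r | Pr i) XF S F (g i).
Proof. by rewrite (additive_sum (XFD F)). Qed.

Lemma XFM F a b : XF S F (a * b) = a * XF S F b + b * XF S F a.
Proof.
have [N [aN bN abN]] := common_depends_below a b (a * b).
rewrite (XF_wide _ abN) (XF_wide _ aN) (XF_wide _ bN) !mulr_sumr -big_split /=.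
by apply: eq_bigr => n _; rewrite dM; ring.
Qed.

Lemma XF_der F a : XF S F (der S a) = der S (XF S F a).
Proof.
set N := (ord S a).+1.
have aN : depends_below a N by apply: depends_below_ord.
have daN : depends_below (der S a) N.
  case=> // n; rewrite ltnS => an.
  by rewrite d_der !ordP ?der0 ?add0r // ltnW.
rewrite (XF_wide _ daN) (XF_wide _ aN) der_sum.
under [RHS]eq_bigr => n _ do rewrite derM -dernS.
under [LHS]eq_bigr => n _ do rewrite d_der mulrDr.
rewrite !big_split /= addrC; congr (_ + _).
rewrite big_ord_recl /= mulr0 add0r [RHS]big_ord_recr /= ordP // mulr0 addr0.
by apply: eq_bigr => n _.
Qed.

Lemma XF_dern F k a : XF S F (dern S k a) = dern S k (XF S F a).
Proof. by elim: k => // k IH; rewrite !dernS XF_der IH. Qed.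

Lemma coef_XFop F P i : (XFop S F P)`_i = XF S F P`_i.
Proof. by rewrite /XFop coef_map_id0 // XF0. Qed.

Lemma size_XFop F P : (size (XFop S F P) <= size P)%N.
Proof. exact: size_poly. Qed.

Lemma XFop_def F P : XFop S F P = \sum_(i < size P) XF S F P`_i *: 'X^i.
Proof. by rewrite /XFop /map_poly poly_def. Qed.

Lemma dapply_XFop F P G :
  dapply S (XFop S F P) G = XF S F (dapply S P G) - dapply S P (XF S F G).
Proof.
rewrite (dapply_wide _ (size_XFop F P)) /dapply XF_sum.
apply/eqP; rewrite eq_sym subr_eq -big_split /=; apply/eqP; apply: eq_bigr => i _.
by rewrite XFM coef_XFop XF_dern; ring.
Qed.

Lemma dapply_Dfun a G : dapply S (Dfun S a) G = XF S G a.
Proof.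
rewrite /Dfun dapply_suml /XF; apply: eq_bigr => n _.
by rewrite dapplyZl dapplyXn mulrC.
Qed.

Lemma dapply_DopF P F G : dapply S (DopF S P F) G = dapply S (XFop S G P) F.
Proof.
rewrite /DopF dapply_suml (dapply_wide _ (size_XFop G P)).
by apply: eq_bigr => k _; rewrite dapplyZl dapply_Dfun coef_XFop mulrC.
Qed.

Lemma dmulDl T : {morph dmul S ^~ T : P Q / P + Q}.
Proof. by move=> P Q; apply: dapply_inj => G _; rewrite dapplyDl !dapply_dmul dapplyDl. Qed.

Lemma dmulBl T : {morph dmul S ^~ T : P Q / P - Q}.
Proof. exact: additiveB (dmulDl T). Qed.

Lemma dmulDr T : {morph dmul S T : P Q / P + Q}.
Proof.
by move=> P Q; apply: dapply_inj => G _; rewrite dapplyDl !dapply_dmul dapplyDl dapplyDr.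
Qed.

Lemma dmulBr T : {morph dmul S T : P Q / P - Q}.
Proof. exact: additiveB (dmulDr T). Qed.

Lemma dmul0l P : dmul S 0 P = 0. Proof. exact: additive0 (dmulDl P). Qed.

Lemma dmul0r P : dmul S P 0 = 0. Proof. exact: additive0 (dmulDr P). Qed.

Lemma dmul_suml I (r : seq I) (Pr : pred I) (g : I -> {poly K}) Q :
  dmul S (\sum_(i <- r | Pr i) g i) Q = \sum_(i <- r | Pr i) dmul S (g i) Q.
Proof. by rewrite (additive_sum (dmulDl Q)). Qed.

Lemma dmul_sumr I (r : seq I) (Pr : pred I) (g : I -> {poly K}) P :
  dmul S P (\sum_(i <- r | Pr i) g i) = \sum_(i <- r | Pr i) dmul S P (g i).
Proof. by rewrite (additive_sum (dmulDr P)). Qed.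

Lemma dmulZl c P Q : dmul S (c *: P) Q = c *: dmul S P Q.
Proof. by apply: dapply_inj => G _; rewrite dapplyZl !dapply_dmul dapplyZl. Qed.

Lemma dmulA P Q T : dmul S (dmul S P Q) T = dmul S P (dmul S Q T).
Proof. by apply: dapply_inj => G _; rewrite !dapply_dmul. Qed.

(* Leibniz rule; [P^`N(l)] is the l-th Hasse derivative of P in [\partial]. *)
Lemma dmulZr P c Q :
  dmul S P (c *: Q) = \sum_(l < size P) dern S l c *: dmul S P^`N(l) Q.
Proof.
apply: dapply_inj => G _; rewrite dapply_dmul dapplyZl dapply_suml.
set x := dapply S Q G.
under [RHS]eq_bigr => l _ do
  rewrite dapplyZl dapply_dmul nderivnE dapply_suml mulr_sumr.
rewrite exchange_big [LHS]/dapply; apply: eq_bigr => i _.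
pose t l := P`_i * ('C(i, l)%:R * (dern S l c * dern S (i - l) x)).
rewrite dern_mul mulr_sumr (sum_ord_truncate t (size P) i.+1).
- by apply: eq_bigr => l _; rewrite /t dapplyZl dapplyXn; ring.
- by move=> l il; rewrite /t bin_small ?mul0r ?mulr0 // (leq_trans (ltn_ord i)).
- by move=> l il; rewrite /t bin_small ?mul0r ?mulr0.
Qed.

Lemma dmul_wide {P Q n m} : (size P <= n)%N -> (size Q <= m)%N ->
  dmul S P Q = \sum_(i < n) \sum_(j < m) \sum_(l < i.+1)
     (P`_i * 'C(i, l)%:R * dern S l Q`_j) *: 'X^(i - l + j).
Proof.
move=> Pn Qm; rewrite /dmul.
pose t i j := \sum_(l < i.+1) (P`_i * 'C(i, l)%:R * dern S l Q`_j) *: 'X^(i - l + j).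
change (\sum_(i < size P) \sum_(j < size Q) t i j = \sum_(i < n) \sum_(j < m) t i j).
have t0P i j : (size P <= i)%N -> t i j = 0.
  by move=> Pi; rewrite /t big1 // => l _; rewrite nth_default // !mul0r scale0r.
have t0Q i j : (size Q <= j)%N -> t i j = 0.
  by move=> Qj; rewrite /t big1 // => l _; rewrite [Q`_j]nth_default // dern0 mulr0 scale0r.
rewrite (sum_ord_truncate (fun i => \sum_(j < m) t i j) (size P) n).
- apply: eq_bigr => i _; apply: (sum_ord_truncate (t i)) => j; last exact: t0Q.
  by move/(leq_trans Qm); apply: t0Q.
- by move=> i Pi; rewrite big1 // => j _; rewrite t0P.
- by move=> i /(leq_trans Pn) Pi; rewrite big1 // => j _; rewrite t0P.
Qed.

Lemma coef_dmul {P Q n m} e : (size P <= n)%N -> (size Q <= m)%N ->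
  (dmul S P Q)`_e = \sum_(i < n) \sum_(j < m) \sum_(l < i.+1)
     P`_i * 'C(i, l)%:R * dern S l Q`_j *+ (e == i - l + j)%N.
Proof.
move=> Pn Qm; rewrite (dmul_wide Pn Qm) !coef_sum; apply: eq_bigr => i _.
rewrite coef_sum; apply: eq_bigr => j _; rewrite coef_sum; apply: eq_bigr => l _.
by rewrite coefZ coefXn mulr_natr.
Qed.

Lemma size_dmul_leq P Q : (size (dmul S P Q) <= (size P + size Q).-1)%N.
Proof.
rewrite (dmul_wide (leqnn _) (leqnn _)).
apply: size_sum_leq => i _; apply: size_sum_leq => j _; apply: size_sum_leq => l _.
rewrite (leq_trans (size_scale_leq _ _)) // size_polyXn.
by have := ltn_ord i; have := ltn_ord j; lia.
Qed.

Lemma coef_dmul_top {P Q p q} : (size P <= p.+1)%N -> (size Q <= q.+1)%N ->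
  (dmul S P Q)`_(p + q) = P`_p * Q`_q.
Proof.
move=> Pp Qq; rewrite (coef_dmul _ Pp Qq) big_ord_recr /= big1 ?add0r; last first.
  move=> i _; rewrite big1 // => j _; rewrite big1 // => l _.
  by rewrite gtn_eqF ?mulr0n //; have := ltn_ord i; have := ltn_ord j; have := ltn_ord l; lia.
rewrite big_ord_recr /= big1 ?add0r; last first.
  move=> j _; rewrite big1 // => l _.
  by rewrite gtn_eqF ?mulr0n //; have := ltn_ord j; have := ltn_ord l; lia.
rewrite big_ord_recl /= big1 ?addr0 ?subn0 ?eqxx ?bin0 ?mulr1 // => l _.
by rewrite gtn_eqF ?mulr0n //; have := ltn_ord l; rewrite /bump /=; lia.
Qed.

Lemma size_dmul {P Q} : P != 0 -> Q != 0 ->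
  size (dmul S P Q) = (size P + size Q).-1.
Proof.
move=> P0 Q0; have sP : (size P).-1.+1 = size P by rewrite prednK ?size_poly_gt0.
have sQ : (size Q).-1.+1 = size Q by rewrite prednK ?size_poly_gt0.
have top := coef_dmul_top (eq_leq (esym sP)) (eq_leq (esym sQ)).
apply/eqP; rewrite eqn_leq size_dmul_leq -{1}sP -{1}sQ addSn addnS /=.
rewrite ltnNge; apply/negP => /leq_sizeP/(_ _ (leqnn _)); rewrite top => /eqP.
by rewrite mulf_eq0 -!lead_coefE !lead_coef_eq0 (negbTE P0) (negbTE Q0).
Qed.

Lemma dmul_eq0 {P Q} : Q != 0 -> dmul S P Q = 0 -> P = 0.
Proof.
move=> Q0 PQ0; apply/eqP; apply: contraT => P0.
have := size_dmul P0 Q0; rewrite PQ0 size_poly0.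
by move: P0 Q0; rewrite -!size_poly_gt0; lia.
Qed.

(** * Bidifferential operators *)

Implicit Types (M N : {poly {poly K}}) (Phi Psi : K -> {poly K}).

Lemma bidF_wide {M} G {n} : (size M <= n)%N ->
  bidF S M G = \sum_(k < n) dern S k G *: M`_k.
Proof.
move=> Mn; rewrite /bidF; apply: (sum_ord_truncate (fun k => dern S k G *: M`_k)) => k.
  by move/(leq_trans Mn)=> Mk; rewrite nth_default ?scaler0.
by move=> Mk; rewrite nth_default ?scaler0.
Qed.

Lemma bidFD G : {morph bidF S ^~ G : M N / M + N}.
Proof.
move=> M N; set n := (size M + size N)%N.
rewrite !(@bidF_wide _ _ n) ?leq_addr ?leq_addl //; last first.
  by rewrite (leq_trans (size_polyD _ _)) // geq_max leq_addr leq_addl.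
by rewrite -big_split; apply: eq_bigr => k _; rewrite coefD scalerDr.
Qed.

Lemma bidF0 G : bidF S 0 G = 0. Proof. exact: additive0 (bidFD G). Qed.

Lemma bidF_dapplyXn M G : bidF S M G = \sum_(k < size M) dapply S 'X^k G *: M`_k.
Proof. by apply: eq_bigr => k _; rewrite dapplyXn. Qed.

Lemma coef_bidF M G j :
  (bidF S M G)`_j = dapply S (\poly_(k < size M) M`_k`_j) G.
Proof.
rewrite /bidF coef_sum (dapply_wide _ (size_poly _ _)).
by apply: eq_bigr => k _; rewrite coefZ coef_poly ltn_ord mulrC.
Qed.

Lemma size_bidF_leq M G D :
  (forall k, (size (M`_k)%R <= D)%N) -> (size (bidF S M G) <= D)%N.
Proof.
by move=> MD; apply: size_sum_leq => k _; apply: leq_trans (size_scale_leq _ _) _.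
Qed.

Lemma bidF_coef_size_leq M D :
  (forall G, G \in V S -> (size (bidF S M G) <= D)%N) -> forall k, (size (M`_k)%R <= D)%N.
Proof.
move=> MD k; have [kM|] := ltnP k (size M); last by move/leq_sizeP->; rewrite ?size_poly0.
apply/leq_sizeP => j Dj.
have Mj0 : \poly_(k < size M) M`_k`_j = 0.
  by apply: dapply_eq0 => G VG; rewrite -coef_bidF; move/leq_sizeP: (MD G VG); apply.
by have := congr1 (fun p : {poly K} => p`_k) Mj0; rewrite coef_poly kM coef0.
Qed.

Definition bidifferential Phi := exists M, forall G, Phi G = bidF S M G.

Lemma eq_bidifferential Phi Psi :
  Phi =1 Psi -> bidifferential Phi -> bidifferential Psi.
Proof. by move=> PhiPsi [M PhiM]; exists M => G; rewrite -PhiPsi. Qed.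

Lemma bidifferential_bidF M : bidifferential (bidF S M).
Proof. by exists M. Qed.

Lemma bidifferential_dapplyZ P Q : bidifferential (fun G => dapply S P G *: Q).
Proof.
exists (\poly_(k < size P) (P`_k *: Q)) => G.
rewrite (bidF_wide _ (size_poly _ _)) /dapply scaler_suml.
by apply: eq_bigr => k _; rewrite coef_poly ltn_ord scalerA mulrC.
Qed.

Lemma bidifferentialD {Phi Psi} : bidifferential Phi -> bidifferential Psi ->
  bidifferential (fun G => Phi G + Psi G).
Proof. by move=> [M PhiM] [N PsiN]; exists (M + N) => G; rewrite bidFD PhiM PsiN. Qed.

Lemma bidifferentialB {Phi Psi} : bidifferential Phi -> bidifferential Psi ->
  bidifferential (fun G => Phi G - Psi G).
Proof.
by move=> [M PhiM] [N PsiN]; exists (M - N) => G; rewrite (additiveB (bidFD G)) PhiM PsiN.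
Qed.

Lemma bidifferential_sum n (Phi : 'I_n -> K -> {poly K}) :
  (forall i, bidifferential (Phi i)) -> bidifferential (fun G => \sum_(i < n) Phi i G).
Proof.
elim: n Phi => [|n IH] Phi PhiB.
  by exists 0 => G; rewrite big_ord0 bidF0.
apply: (eq_bidifferential (fun G => Phi ord0 G + \sum_(i < n) Phi (lift ord0 i) G)).
  by move=> G; rewrite big_ord_recl.
by apply: bidifferentialD => //; apply: IH.
Qed.

Lemma bidifferential_dmulr {Phi} Q :
  bidifferential Phi -> bidifferential (fun G => dmul S (Phi G) Q).
Proof.
move=> [M PhiM].
apply: (eq_bidifferential (fun G => \sum_(k < size M) dapply S 'X^k G *: dmul S M`_k Q)).
  by move=> G; rewrite PhiM bidF_dapplyXn dmul_suml; apply: eq_bigr => k _; rewrite dmulZl.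
by apply: bidifferential_sum => k; apply: bidifferential_dapplyZ.
Qed.

Lemma bidifferential_dmull P {Phi} :
  bidifferential Phi -> bidifferential (fun G => dmul S P (Phi G)).
Proof.
move=> [M PhiM].
apply: (eq_bidifferential (fun G => \sum_(k < size M) \sum_(l < size P)
   dapply S 'X^(l + k) G *: dmul S P^`N(l) M`_k)).
  move=> G; rewrite PhiM /bidF dmul_sumr; apply: eq_bigr => k _.
  by rewrite dmulZr; apply: eq_bigr => l _; rewrite dapplyXn dern_addn.
by do 2!apply: bidifferential_sum => ?; apply: bidifferential_dapplyZ.
Qed.

Lemma bidifferential_comp {Phi} C :
  bidifferential Phi -> bidifferential (fun G => Phi (dapply S C G)).
Proof.
move=> [M PhiM].
apply: (eq_bidifferential (fun G => \sum_(k < size M) dapply S (dmul S 'X^k C) G *: M`_k)).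
  by move=> G; rewrite PhiM bidF_dapplyXn; apply: eq_bigr => k _; rewrite dapply_dmul.
by apply: bidifferential_sum => k; apply: bidifferential_dapplyZ.
Qed.

Definition integrability_lhs B G := XFop S (dapply S B G) B - dmul S (DopF S B G) B.

Lemma bidifferential_integrability_lhs B : bidifferential (integrability_lhs B).
Proof.
apply: bidifferentialB.
  apply: (eq_bidifferential (fun G => \sum_(i < size B)
      dapply S (dmul S (Dfun S B`_i) B) G *: 'X^i)).
    by move=> G; rewrite XFop_def; apply: eq_bigr => i _; rewrite dapply_dmul dapply_Dfun.
  by apply: bidifferential_sum => i; apply: bidifferential_dapplyZ.
apply: bidifferential_dmulr.
apply: (eq_bidifferential (fun G => \sum_(k < size B) dapply S 'X^k G *: Dfun S B`_k)).
  by move=> G; rewrite /DopF; apply: eq_bigr => k _; rewrite dapplyXn.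
by apply: bidifferential_sum => k; apply: bidifferential_dapplyZ.
Qed.

Lemma integrability_lhs_dmul B C F :
  integrability_lhs (dmul S B C) F = dmul S (integrability_lhs B (dapply S C F)) C
    + dmul S B (XFop S (dapply S (dmul S B C) F) C - dmul S (DopF S C F) (dmul S B C)).
Proof.
apply: dapply_inj => G _; rewrite /integrability_lhs.
rewrite !(dapplyBl, dapplyDl, dapplyBr, dapplyDr, dapply_dmul, dapply_XFop, dapply_DopF); ring.
Qed.

Lemma integrability_lhs_ldivisible {B C M F} :
  integrability_lhs (dmul S B C) F = dmul S (dmul S B C) (bidF S M F) ->
  exists Z, dmul S (integrability_lhs B (dapply S C F)) C = dmul S B Z.
Proof.
rewrite integrability_lhs_dmul => lhsBC.
exists (dmul S C (bidF S M F)
  - (XFop S (dapply S (dmul S B C) F) C - dmul S (DopF S C F) (dmul S B C))).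
by rewrite dmulBr -dmulA -lhsBC addrK.
Qed.

(** * Left division by B *)

Lemma bidF_monomial (x : nat -> K) n e G :
  bidF S (\poly_(k < n) (x k *: 'X^e)) G = dapply S (\poly_(k < n) x k) G *: 'X^e.
Proof.
rewrite (bidF_wide _ (size_poly _ _)) (dapply_wide _ (size_poly _ _)) scaler_suml.
by apply: eq_bigr => k _; rewrite !coef_poly ltn_ord scalerA mulrC.
Qed.

(* One step of long division: the quotient
   [(lead_coef B)^-1 M_kD \partial^(D - ord B)] cancels the coefficient of
   [\partial^D]. *)
Lemma bidF_ldiv_step {B M D} : B != 0 -> (size B <= D.+1)%N ->
  (forall k, (size (M`_k)%R <= D.+1)%N) ->
  exists N (M' : {poly {poly K}}), (forall k, (size (M'`_k)%R <= D)%N) /\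
    forall G, bidF S M G = dmul S B (bidF S N G) + bidF S M' G.
Proof.
move=> B0 BD MD; set e := (D - (size B).-1)%N.
have sB : (size B).-1.+1 = size B by rewrite prednK ?size_poly_gt0.
have De : ((size B).-1 + e)%N = D by rewrite subnKC // -ltnS sB.
pose N := \poly_(k < size M) (((lead_coef B)^-1 * M`_k`_D) *: ('X^e : {poly K})).
have [M' M'E] := bidifferentialB (bidifferential_bidF M)
  (bidifferential_dmull B (bidifferential_bidF N)).
exists N, M'; split => [|G]; last by rewrite -M'E addrC subrK.
apply: bidF_coef_size_leq => G _; rewrite -M'E.
set c := dapply S (\poly_(k < size M) ((lead_coef B)^-1 * M`_k`_D)) G.
have NG : bidF S N G = c *: 'X^e by rewrite bidF_monomial.
have sNG : (size (bidF S N G) <= e.+1)%N.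
  by rewrite NG (leq_trans (size_scale_leq _ _)) // size_polyXn.
have sMG : (size (bidF S M G) <= D.+1)%N by apply: size_bidF_leq.
have sBNG : (size (dmul S B (bidF S N G)) <= D.+1)%N.
  by apply: leq_trans (size_dmul_leq _ _) _; lia.
have topBNG : (dmul S B (bidF S N G))`_D = (bidF S M G)`_D.
  rewrite -{1}De coef_dmul_top ?sB // NG coefZ coefXn eqxx mulr1 coef_bidF -lead_coefE.
  rewrite /c; have -> : \poly_(k < size M) ((lead_coef B)^-1 * M`_k`_D) =
      (lead_coef B)^-1 *: \poly_(k < size M) M`_k`_D.
    by apply/polyP => j; rewrite coefZ !coef_poly; case: ifP; rewrite ?mulr0.
  by rewrite dapplyZl mulrA divff ?mul1r ?lead_coef_eq0.
apply/leq_sizeP => j Dj; rewrite coefB.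
have [->|jD] := eqVneq j D; first by rewrite topBNG subrr.
have D1j : (D.+1 <= j)%N by rewrite ltn_neqAle eq_sym jD.
by rewrite (leq_sizeP _ _ sMG) ?(leq_sizeP _ _ sBNG) ?subrr.
Qed.

Lemma bidF_ldiv {B} M : B != 0 ->
  exists N (Rm : {poly {poly K}}), (forall k, (size (Rm`_k)%R < size B)%N) /\
    forall G, bidF S M G = dmul S B (bidF S N G) + bidF S Rm G.
Proof.
move=> B0; have [D MD] : exists D, forall k, (size (M`_k)%R <= D)%N.
  exists (\max_(k < size M) size (M`_k)%R)%N => k.
  have [kM|/leq_sizeP-> //] := ltnP k (size M); last by rewrite size_poly0.
  exact: (@leq_bigmax _ (fun k : 'I_(size M) => size (M`_k)%R) (Ordinal kM)).
elim: D M MD => [|D IH] M MD.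
  exists 0, M; split => [k|G]; last by rewrite bidF0 dmul0r add0r.
  by rewrite (leq_ltn_trans (MD k)) // size_poly_gt0.
have [DB|BD] := ltnP D.+1 (size B).
  exists 0, M; split => [k|G]; last by rewrite bidF0 dmul0r add0r.
  exact: leq_ltn_trans (MD k) DB.
have [N1 [M' [M'D M'E]]] := bidF_ldiv_step B0 BD MD.
have [N' [Rm [RmB M'N']]] := IH M' M'D.
exists (N1 + N'), Rm; split => // G.
by rewrite M'E M'N' bidFD dmulDr addrA.
Qed.

(** * Top variables *)

Lemma exists_top_var Z H0 : exists H, [/\ (H0 <= H)%N,
  forall e, depends_below Z`_e H.+1 & (H0 < H)%N -> exists e, d S H Z`_e != 0].
Proof.
suff: forall k, (forall e, depends_below Z`_e (H0 + k).+1) ->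
    exists H, [/\ (H0 <= H)%N, forall e, depends_below Z`_e H.+1
                & (H0 < H)%N -> exists e, d S H Z`_e != 0].
  move/(_ (poly_ord Z)); apply=> e.
  by apply: (depends_below_le _ (poly_ordP Z e)); rewrite ltnW // ltnS leq_addl.
elim=> [|k IH] Zk; first by exists H0; rewrite addn0 in Zk; split; rewrite ?ltnn.
have [/existsP [e dZe]|dZ0] := boolP [exists e : 'I_(size Z), d S (H0 + k.+1) Z`_e != 0].
  by exists (H0 + k.+1)%N; split=> [|//|_]; [exact: leq_addr | exists e].
apply: IH => e n; rewrite leq_eqVlt => /orP [/eqP <-|]; last by rewrite -addnS; apply: Zk.
have [eZ|/leq_sizeP-> //] := ltnP e (size Z); last exact: d0.
by apply/eqP; move: dZ0; rewrite negb_exists => /forallP/(_ (Ordinal eZ)); rewrite addnS negbK.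
Qed.

Lemma dMl_natmul n c w k : d S n c = 0 -> d S n (c * w *+ k) = c * d S n w *+ k.
Proof. by move=> dc; rewrite (additiveMn (dD S n)) dMl. Qed.

Section DmulTopVar.
Context {B Z : {poly K}} {H : nat}.
Hypothesis BH : forall i, depends_below B`_i H.
Let n := (size B).-1.

Let d_coef_dmul t e : (H <= t)%N -> d S t (dmul S B Z)`_e =
  \sum_(i < n.+1) \sum_(j < size Z) \sum_(l < i.+1)
    B`_i * 'C(i, l)%:R * d S t (dern S l Z`_j) *+ (e == i - l + j)%N.
Proof.
move=> Ht; rewrite (coef_dmul _ (leqSpred _) (leqnn _)) d_sum; apply: eq_bigr => i _.
rewrite d_sum; apply: eq_bigr => j _; rewrite d_sum; apply: eq_bigr => l _.
have dc : d S t (B`_i * 'C(i, l)%:R) = 0 by rewrite dMl ?d_nat ?mulr0 //; apply: BH.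
by rewrite dMl_natmul.
Qed.

Lemma depends_below_coef_dmul :
  (forall e, depends_below Z`_e H) -> forall e, depends_below (dmul S B Z)`_e (H + n).
Proof.
move=> ZH e t Ht; rewrite d_coef_dmul; last exact: leq_trans (leq_addr _ _) Ht.
rewrite big1 // => i _; rewrite big1 // => j _; rewrite big1 // => l _.
rewrite (depends_below_dern l (ZH j) t) ?mulr0 ?mul0rn //.
by apply: leq_trans Ht; have := ltn_ord i; have := ltn_ord l; lia.
Qed.

Lemma d_coef_dmul_top e : (forall e, depends_below Z`_e H.+1) ->
  d S (H + n) (dmul S B Z)`_e = lead_coef B * d S H Z`_e.
Proof.
move=> ZH; rewrite d_coef_dmul ?leq_addr // big_ord_recr /= big1 ?add0r; last first.
  move=> i _; rewrite big1 // => j _; rewrite big1 // => l _.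
  rewrite (depends_below_dern l (ZH j)) ?mulr0 ?mul0rn //.
  by have := ltn_ord i; have := ltn_ord l; lia.
rewrite (eq_bigr (fun j : 'I_(size Z) => lead_coef B * d S H Z`_j *+ (e == j))).
  rewrite (sum_ord_delta (fun j => lead_coef B * d S H Z`_j)).
  by case: ltnP => // /leq_sizeP/(_ _ (leqnn e)) ->; rewrite d0 mulr0.
move=> j _; rewrite big_ord_recr /= big1 ?add0r; last first.
  move=> l _; rewrite (depends_below_dern l (ZH j)) ?mulr0 ?mul0rn //.
  by have := ltn_ord l; lia.
by rewrite (d_dern_top n (ZH j)) binn subnn add0n mulr1.
Qed.

End DmulTopVar.

Lemma d_coef_dmul_bidF_u (Sm : {poly {poly K}}) C (N t e : nat) :
  (\max_(j < size Sm) poly_ord (dmul S Sm`_j C) <= N)%N ->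
  d S (N + t) (dmul S (bidF S Sm (u S N)) C)`_e =
    if (t < size Sm)%N then (dmul S Sm`_t C)`_e else 0.
Proof.
move=> SmN; rewrite /bidF dmul_suml coef_sum d_sum.
rewrite -(sum_ord_delta (fun j => (dmul S Sm`_j C)`_e)); apply: eq_bigr => j _.
have SmjN : depends_below (dmul S Sm`_j C)`_e N.
  apply: (depends_below_le _ (poly_ordP _ e)); apply: leq_trans SmN.
  exact: (@leq_bigmax _ (fun j : 'I_(size Sm) => poly_ord (dmul S Sm`_j C)) j).
rewrite dmulZl dern_u coefZ dM du SmjN ?leq_addr //.
by rewrite mulr0 add0r eqn_add2l eq_sym mulr_natr.
Qed.

Lemma size_cofactor_lt {B C P Z} : B != 0 -> C != 0 -> (size P < size B)%N ->
  dmul S P C = dmul S B Z -> (size Z < size C)%N.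
Proof.
move=> B0 C0 PB PCBZ; have [->|Z0] := eqVneq Z 0; first by rewrite size_poly0 size_poly_gt0.
have := size_dmul_leq P C; rewrite PCBZ size_dmul //.
by move: B0 Z0 C0; rewrite -!size_poly_gt0; lia.
Qed.

(* Take F = u^(N) with N large. The highest variable of the left side is
   u^(N + J), J the top index of Sm, with coefficient Sm_J C; that of B Z is
   u^(H + ord B), with coefficient lead_coef B times d/du^(H) Z, where u^(H)
   is the highest variable of Z. Each ordering of N + J and H + ord B is
   contradictory, the equality case because ord Z < ord C. *)
Lemma bidF_eq0_of_ldivisible {B C} {Sm : {poly {poly K}}} :
  B != 0 -> C != 0 -> (forall j, (size (Sm`_j)%R < size B)%N) ->
  (forall F, F \in V S -> exists Z, dmul S (bidF S Sm F) C = dmul S B Z) -> Sm = 0.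
Proof.
move=> B0 C0 SmB divisible; apply/eqP; apply: contraT => Sm0.
set J := (size Sm).-1; set n := (size B).-1.
have sSm : size Sm = J.+1 by rewrite prednK ?size_poly_gt0.
have SmJ0 : Sm`_J != 0 by rewrite -lead_coef_eq0 lead_coefE in Sm0.
pose T j := dmul S Sm`_j C.
have TJ0 : T J != 0 by apply: contra SmJ0 => /eqP/(dmul_eq0 C0)->.
set N := (\max_(j < size Sm) poly_ord (dmul S Sm`_j C) + poly_ord B + n).+1.
have [Z eZ] := divisible _ (Vu S N).
have dBZ t e : d S (N + t) (dmul S B Z)`_e = if (t < size Sm)%N then (T t)`_e else 0.
  by rewrite -eZ d_coef_dmul_bidF_u // /N; lia.
have sZC : (size Z < size C)%N.
  apply: (size_cofactor_lt B0 C0 _ eZ).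
  have sB : (size B).-1.+1 = size B by rewrite prednK ?size_poly_gt0.
  by rewrite -sB ltnS; apply: size_bidF_leq => k; rewrite -ltnS sB.
have [H [BH ZH topH]] := exists_top_var Z (poly_ord B).
have BH' i : depends_below B`_i H := depends_below_le H (poly_ordP B i) BH.
case: (ltngtP (N + J) (H + n)) => [NJ_lt | NJ_gt | NJ_eq].
- have [|e dZe] := topH; first by move: NJ_lt; rewrite /N; lia.
  have : lead_coef B * d S H Z`_e = 0.
    rewrite -(d_coef_dmul_top BH' e ZH) -/n.
    have -> : (H + n = N + (H + n - N))%N by lia.
    by rewrite dBZ ifF //; apply/negbTE; rewrite -leqNgt sSm; lia.
  by move/eqP; rewrite mulf_eq0 lead_coef_eq0 (negbTE B0) (negbTE dZe).
- case/negP: TJ0; apply/eqP/polyP => e; rewrite coef0.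
  have := dBZ J e; rewrite sSm ltnSn => <-.
  have BH1 i : depends_below B`_i H.+1 := depends_below_le H.+1 (BH' i) (leqnSn H).
  by apply: (depends_below_coef_dmul BH1 ZH e (N + J)); rewrite addSn -/n.
- set e := (size (T J)).-1.
  have sTJ : (size C <= size (T J))%N.
    by rewrite size_dmul // -subn1; move: SmJ0; rewrite -size_poly_gt0; lia.
  have ZTJ := leq_trans sZC sTJ.
  have Ze : Z`_e = 0 by apply: nth_default; rewrite /e -ltnS (ltn_predK ZTJ).
  have := dBZ J e; rewrite sSm ltnSn NJ_eq (d_coef_dmul_top BH' e ZH) Ze d0 mulr0.
  by move/esym/eqP; rewrite /e -lead_coefE lead_coef_eq0 (negbTE TJ0).
Qed.

Lemma bidF_comp_eq0 {Rm : {poly {poly K}}} {C} : C != 0 ->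
  (forall F, F \in V S -> bidF S Rm (dapply S C F) = 0) -> Rm = 0.
Proof.
move=> C0 RmC0.
have Rm0 G : bidF S Rm G = 0.
  apply/polyP => j; rewrite coef_bidF coef0.
  suff -> : \poly_(k < size Rm) Rm`_k`_j = 0 by rewrite dapply0l.
  apply: (dmul_eq0 C0); apply: dapply_eq0 => F VF.
  by rewrite dapply_dmul -coef_bidF RmC0 // coef0.
apply/polyP => k; rewrite coef0; apply/eqP; rewrite -size_poly_leq0.
by apply: bidF_coef_size_leq => G _; rewrite Rm0 size_poly0.
Qed.

Lemma integrable_dmul_l B C : C != 0 -> integrable S (dmul S B C) -> integrable S B.
Proof.
move=> C0 [M AM].
have [->|B0] := eqVneq B 0.
  by exists 0 => F _; rewrite dmul0l dmul0r /XFop map_poly0 subrr.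
have [Lam LamE] := bidifferential_integrability_lhs B.
have [N [Rm [RmB LamN]]] := bidF_ldiv Lam B0.
have RmE G : bidF S Rm G = integrability_lhs B G - dmul S B (bidF S N G).
  by rewrite LamE LamN addrAC subrr add0r.
have [Sm SmE] := bidifferential_comp C (bidifferential_bidF Rm).
have Sm0 : Sm = 0.
  apply: (bidF_eq0_of_ldivisible B0 C0) => [j|F VF].
    have sB : (size B).-1.+1 = size B by rewrite prednK ?size_poly_gt0.
    rewrite -sB ltnS; move: j; apply: bidF_coef_size_leq => F _; rewrite -SmE.
    by apply: size_bidF_leq => k; rewrite -ltnS sB.
  have [Z lhsBZ] := integrability_lhs_ldivisible (AM F VF).
  exists (Z - dmul S (bidF S N (dapply S C F)) C).
  by rewrite -SmE RmE dmulBl lhsBZ dmulA -dmulBr.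
have Rm0 : Rm = 0 by apply: (bidF_comp_eq0 C0) => F _; rewrite SmE Sm0 bidF0.
exists N => F _; rewrite -[LHS]/(integrability_lhs B F).
by rewrite LamE LamN Rm0 bidF0 addr0.
Qed.

End DiffAlgebra.

Theorem lemma3p7 (R : realType) (K : fieldType) (S : DiffAlg R K)
    (A B C : {poly K}) :
  constants_alg_closed S ->
  C != 0 ->
  A = dmul S B C ->
  integrable S A ->
  integrable S B.
Proof.
by move=> _ C0 ->; apply: integrable_dmul_l.
Qed.
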